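(* Let $\mathcal{A}$ be an algorithm, executed by asynchronous processes, that accesses a racing object whose laps are decidable objects. Suppose that in $\mathcal{A}$, whenever a process $p$ enters a new object, the last object previously left by $p$ (if any) is decided at that time. Then, in every execution $\rho$ of $\mathcal{A}$, at the time a process $p$ enters an object $o$, every object $o'$ with $o' \ll_{\rho} o$ is decided.
   Context: Decidable objects: each such object is either undecided or decided at any point of an execution; it starts undecided, and once it is decided it remains decided for the rest of the execution. Racing object: a shared object whose domain is a set of objects called laps. A process invokes its operation enter(), which returns a lap; the process then enters that lap, and it leaves the lap it had previously entered (if any) when it enters a new one. For every execution $\rho$, the set of laps entered during $\rho$ is totally ordered by an order $\ll_{\rho}$, and the racing satisfies the ordering property: whenever a process $p$ enters a lap $l$ in $\rho$, either (a) the lap $p$ has just left is the greatest lap smaller than $l$ with respect to $\ll_{\rho}$ among the laps entered during $\rho$, or (b) some process left $l$ before $p$ enters $l$. *)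

(* At step t either
   some process p enters lap l (ev t = Some (p, l)) or some other step happens
   (ev t = None).  Finite executions are padded with None. *)

Definition execution (Proc Lap : Type) := nat -> option (Proc * Lap).

Section Racing.
#[local] Set Implicit Arguments.
Context {Proc Lap : Type}.
Implicit Types (ev : execution Proc Lap).

Definition entered ev (l : Lap) : Prop := exists t p, ev t = Some (p, l).

(* l0 is the lap p has just left when it enters a lap at time t,
   i.e. the last lap p entered strictly before t *)
Definition last_lap ev (p : Proc) (t : nat) (l0 : Lap) : Prop :=
  exists t0, t0 < t /\ ev t0 = Some (p, l0) /\
    forall t' l', t0 < t' < t -> ev t' <> Some (p, l').

Definition no_prev_lap ev (p : Proc) (t : nat) : Prop :=
  forall t' l', t' < t -> ev t' <> Some (p, l').

(* some process left lap l strictly before time t: it entered l at t1 and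
   then entered another lap at t2 < t (with no entry in between) *)
Definition left_before ev (l : Lap) (t : nat) : Prop :=
  exists q t1 t2 l2, t1 < t2 /\ t2 < t /\ ev t1 = Some (q, l) /\
    ev t2 = Some (q, l2) /\ forall t' l', t1 < t' < t2 -> ev t' <> Some (q, l').

Definition total_order_on_entered ev (lt : Lap -> Lap -> Prop) : Prop :=
  (forall l, ~ lt l l) /\
  (forall a b c, lt a b -> lt b c -> lt a c) /\
  (forall a b, entered ev a -> entered ev b -> a = b \/ lt a b \/ lt b a).

Definition is_pred ev lt (l0 l : Lap) : Prop :=
  entered ev l0 /\ lt l0 l /\
  forall l', entered ev l' -> lt l0 l' -> ~ lt l' l.

Definition is_min ev lt (l : Lap) : Prop :=
  forall l', entered ev l' -> ~ lt l' l.

(* the ordering property of the racing object; when p has left no lap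
   (first entry), clause (a) reads "there is no lap smaller than l" *)
Definition ordering_property ev lt : Prop :=
  forall t p l, ev t = Some (p, l) ->
    (exists l0, last_lap ev p t l0 /\ is_pred ev lt l0 l) \/
    (no_prev_lap ev p t /\ is_min ev lt l) \/
    left_before ev l t.

Definition decidable_objects (decided : Lap -> nat -> Prop) : Prop :=
  (forall o, ~ decided o 0) /\
  (forall o t t', t <= t' -> decided o t -> decided o t').

End Racing.

From Stdlib Require Import Arith Lia.

(* Strong induction on the time of entry.  If p enters o and o' << o, the
   ordering property leaves two cases (o cannot be minimal).  Either p just
   left the predecessor l0 of o, which is decided by the algorithm's
   assumption when o' = l0, and otherwise o' << l0, so o' was decided already
   when p entered l0; or some process left o, hence entered o, earlier, and
   o' was decided then.  Decidedness persists in both cases. *)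

Section DecidedBelow.
#[local] Set Implicit Arguments.

Variables (Proc Lap : Type) (ev : execution Proc Lap).
Variables (lt : Lap -> Lap -> Prop) (decided : Lap -> nat -> Prop).

Hypothesis lt_total : total_order_on_entered ev lt.
Hypothesis ordering : ordering_property ev lt.
Hypothesis decided_mono : forall o t t', t <= t' -> decided o t -> decided o t'.
Hypothesis decided_left :
  forall {t p l l0}, ev t = Some (p, l) -> last_lap ev p t l0 -> decided l0 t.

Definition decided_below_at (t : nat) : Prop :=
  forall p o o', ev t = Some (p, o) -> entered ev o' -> lt o' o -> decided o' t.

Lemma decided_below_persists t t' o o' p :
  t < t' -> decided_below_at t -> ev t = Some (p, o) ->
  entered ev o' -> lt o' o -> decided o' t'.
Proof.
  intros Htt' Hbelow Hev Hen Hlt.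
  apply decided_mono with t; [lia|].
  exact (Hbelow p o o' Hev Hen Hlt).
Qed.

Lemma below_pred_cases l0 l o' :
  is_pred ev lt l0 l -> entered ev o' -> lt o' l -> o' = l0 \/ lt o' l0.
Proof.
  destruct lt_total as [_ [_ Htot]].
  intros [Hen0 [_ Hmax]] Hen Hlt.
  destruct (Htot o' l0 Hen Hen0) as [-> | [H | H]]; auto.
  exfalso; exact (Hmax o' Hen H Hlt).
Qed.

Lemma decided_below_all t : decided_below_at t.
Proof.
  induction t as [t IH] using (well_founded_induction Nat.lt_wf_0).
  intros p o o' Hev Hen Hlt.
  destruct (ordering Hev)
    as [[l0 [Hlast Hpred]] | [[_ Hmin] | Hleft]].
  - destruct (below_pred_cases Hpred Hen Hlt) as [-> | Hlt0].
    + exact (decided_left Hev Hlast).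
    + destruct Hlast as [t0 [Ht0 [Hev0 _]]].
      exact (decided_below_persists Ht0 (IH t0 Ht0) Hev0 Hen Hlt0).
  - exfalso; exact (Hmin o' Hen Hlt).
  - destruct Hleft as [q [t1 [t2 [l2 [H12 [H2t [Hev1 _]]]]]]].
    assert (Ht1 : t1 < t) by lia.
    exact (decided_below_persists Ht1 (IH t1 Ht1) Hev1 Hen Hlt).
Qed.

End DecidedBelow.

Theorem mainTheorem1 (Proc Lap : Type) (ev : execution Proc Lap)
  (lt : Lap -> Lap -> Prop) (decided : Lap -> nat -> Prop) :
  total_order_on_entered ev lt ->
  ordering_property ev lt ->
  decidable_objects decided ->
  (forall t p l l0, ev t = Some (p, l) -> last_lap ev p t l0 -> decided l0 t) ->
  forall t p o o', ev t = Some (p, o) -> entered ev o' -> lt o' o -> decided o' t.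
Proof.
  intros Htot Hord [_ Hmono] Halg t.
  exact (@decided_below_all Proc Lap ev lt decided Htot Hord Hmono Halg t).
Qed.
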